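(* Let $H_0,H_1$ be complex Hilbert spaces, $G$ a densely defined closed operator from $H_0$ into $H_1$ and $D$ a densely defined closed operator from $H_1$ into $H_0$ with $-G^*\subset D$. Then $\mathrm{BD}(G)=\ker(I-DG)$ and $\mathrm{BD}(D)=\ker(I-GD)$.
   Context: $\mathring D=-G^*$, $\mathring G=-D^*$. Domains carry graph inner products, e.g. $(u,v)_{\mathrm{dom}(G)}=(u,v)_{H_0}+(Gu,Gv)_{H_1}$. $\mathrm{BD}(G)$ is the orthogonal complement of $\mathrm{dom}(\mathring G)$ in $\mathrm{dom}(G)$ and $\mathrm{BD}(D)$ the orthogonal complement of $\mathrm{dom}(\mathring D)$ in $\mathrm{dom}(D)$. $\ker(I-DG)=\{u\in\mathrm{dom}(G):Gu\in\mathrm{dom}(D),\ DGu=u\}$ and $\ker(I-GD)=\{q\in\mathrm{dom}(D):Dq\in\mathrm{dom}(G),\ GDq=q\}$. *)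

From HB Require Import structures.
From mathcomp Require Import all_boot all_order all_algebra.
From mathcomp Require Import reals complex.
From Stdlib Require Import ClassicalEpsilon.
Set Implicit Arguments. Unset Strict Implicit. Unset Printing Implicit Defensive.
Import Order.TTheory GRing.Theory Num.Theory.
Local Open Scope ring_scope.

Section Hilbert.
Variables (R : realType).
Local Notation C := (R[i]).

Definition is_inner (V : lmodType C) (ip : V -> V -> C) : Prop :=
  [/\ (forall (a : C) (x y z : V), ip (a *: x + y) z = a * ip x z + ip y z),
      (forall x y : V, ip y x = Num.conj (ip x y)),
      (forall x : V, 0 <= ip x x) &
      (forall x : V, ip x x = 0 -> x = 0)].

Definition ipnorm (V : lmodType C) (ip : V -> V -> C) (x : V) : R :=
  Num.sqrt (complex.Re (ip x x)).

Definition ip_cauchy (V : lmodType C) (ip : V -> V -> C) (u : nat -> V) :=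
  forall e : R, 0 < e -> exists N : nat, forall m n : nat,
    (N <= m)%N -> (N <= n)%N -> ipnorm ip (u m - u n) < e.

Definition ip_cvg (V : lmodType C) (ip : V -> V -> C) (u : nat -> V) (l : V) :=
  forall e : R, 0 < e -> exists N : nat, forall n : nat,
    (N <= n)%N -> ipnorm ip (u n - l) < e.

Definition is_hilbert (V : lmodType C) (ip : V -> V -> C) : Prop :=
  is_inner ip /\ forall u : nat -> V, ip_cauchy ip u -> exists l, ip_cvg ip u l.

End Hilbert.

Record op (U V : Type) := Op { dom : U -> Prop; app : U -> V }.

Section Operators.
Variables (R : realType).
Local Notation C := (R[i]).
Variables (U V : lmodType C) (ipU : U -> U -> C) (ipV : V -> V -> C).

Definition is_linop (T : op U V) : Prop :=
  dom T 0 /\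
  forall (a : C) (x y : U), dom T x -> dom T y ->
    dom T (a *: x + y) /\ app T (a *: x + y) = a *: app T x + app T y.

Definition densely_defined (T : op U V) : Prop :=
  forall (x : U) (e : R), 0 < e -> exists y, dom T y /\ ipnorm ipU (x - y) < e.

Definition closed_op (T : op U V) : Prop :=
  forall (u : nat -> U) (x : U) (y : V),
    (forall n, dom T (u n)) -> ip_cvg ipU u x -> ip_cvg ipV (fun n => app T (u n)) y ->
    dom T x /\ app T x = y.

Definition adj_rel (T : op U V) (y : V) (z : U) : Prop :=
  forall x, dom T x -> ipV (app T x) y = ipU x z.

Definition adjoint (T : op U V) : op V U :=
  Op (fun y => exists z, adj_rel T y z)
     (fun y => epsilon (inhabits (0 : U)) (fun z => adj_rel T y z)).

End Operators.

Definition op_neg (U : Type) (V : zmodType) (T : op U V) : op U V :=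
  Op (dom T) (fun x => - app T x).

Definition op_sub (U V : Type) (A B : op U V) : Prop :=
  forall x, dom A x -> dom B x /\ app B x = app A x.

(* BD(T): orthogonal complement of dom(T0) in dom(T) for the graph inner
   product (u,v)_{dom T} = (u,v) + (Tu,Tv) *)
Definition BD (R : realType) (U V : lmodType (R[i]))
  (ipU : U -> U -> R[i]) (ipV : V -> V -> R[i]) (T T0 : op U V) (u : U) : Prop :=
  dom T u /\ forall v, dom T0 v -> ipU u v + ipV (app T u) (app T v) = 0.

Definition ker_I_comp (U V : Type) (T : op U V) (S : op V U) (u : U) : Prop :=
  dom T u /\ dom S (app T u) /\ app S (app T u) = u.

From HB Require Import structures.
From mathcomp Require Import all_boot all_order all_algebra.
From mathcomp Require Import reals complex.
From mathcomp Require Import lra.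
From Stdlib Require Import ClassicalEpsilon.
Import Order.TTheory GRing.Theory Num.Theory.
Set Implicit Arguments. Unset Strict Implicit. Unset Printing Implicit Defensive.
Local Open Scope ring_scope.

(* Everything rests on the fact that a closed densely defined operator [T]
   equals its biadjoint.  Project [(w, u)] orthogonally onto the graph of [T],
   a complete subspace of [X * Y] for the product inner product: the residual
   [(w - z, u - T z)] is orthogonal to the graph, i.e. [u - T z] lies in
   [dom T^*] with [T^* (u - T z) = z - w]; if [(u, v) = (w, T^* v)] for all
   [v] in [dom T^*], the residual has norm zero, so [w \in dom T], [T w = u].
   Applied to [G], the inclusion [-G^* \subset D] gives [-D^* \subset G].
   Now [u \in BD(G)] says exactly [(u, v) = (G u, D^* v)] for [v] in
   [dom D^*], which by the biadjoint property of [D] means [G u \in dom D]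
   and [D G u = u]; symmetrically for [BD(D)]. *)

Section ComplexParts.
Variable R : realType.
Implicit Types (z : R[i]) (k : R).

Lemma ReD z1 z2 : complex.Re (z1 + z2) = complex.Re z1 + complex.Re z2.
Proof. by case: z1; case: z2. Qed.

Lemma ReN z : complex.Re (- z) = - complex.Re z.
Proof. by case: z. Qed.

Lemma Re_realM k z : complex.Re (k%:C%C * z) = k * complex.Re z.
Proof. by case: z => a b /=; rewrite mul0r subr0. Qed.

Lemma Re_conjC z : complex.Re (Num.conj z) = complex.Re z.
Proof. by apply: (@complexI R); rewrite complexRe Re_conj -complexRe. Qed.

Lemma Re_conjCiM z : complex.Re (Num.conj 'i * z) = complex.Im z.
Proof. by rewrite conjCi -complexiE; case: z => a b /=; rewrite oppr0 mul0r sub0r mulN1r opprK. Qed.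

Lemma complex_ReIm_eq z1 z2 :
  complex.Re z1 = complex.Re z2 -> complex.Im z1 = complex.Im z2 -> z1 = z2.
Proof. by case: z1; case: z2 => /= ? ? ? ? -> ->. Qed.

End ComplexParts.

Section InnerProduct.
Variables (R : realType) (V : lmodType R[i]) (ip : V -> V -> R[i]).
Hypothesis hip : is_inner ip.
Implicit Types (x y z : V) (a : R[i]) (k t : R).

Definition rip x y : R := complex.Re (ip x y).
Definition sqnorm x : R := rip x x.

Lemma ipZDl a x y z : ip (a *: x + y) z = a * ip x z + ip y z.
Proof. by case: hip. Qed.

Lemma ipC x y : ip y x = Num.conj (ip x y).
Proof. by case: hip. Qed.

Lemma ip0l z : ip 0 z = 0.
Proof.
have := ipZDl 1 0 0 z; rewrite scale1r addr0 mul1r => h.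
by apply: (@addrI _ (ip 0 z)); rewrite -h addr0.
Qed.

Lemma ipDl x y z : ip (x + y) z = ip x z + ip y z.
Proof. by rewrite -[x in LHS]scale1r ipZDl mul1r. Qed.

Lemma ipZl a x z : ip (a *: x) z = a * ip x z.
Proof. by rewrite -[a *: x]addr0 ipZDl ip0l addr0. Qed.

Lemma ipNl x z : ip (- x) z = - ip x z.
Proof. by rewrite -scaleN1r ipZl mulN1r. Qed.

Lemma ipBl x y z : ip (x - y) z = ip x z - ip y z.
Proof. by rewrite ipDl ipNl. Qed.

Lemma ipDr x y z : ip z (x + y) = ip z x + ip z y.
Proof. by rewrite (ipC x z) (ipC y z) (ipC (x + y) z) ipDl rmorphD. Qed.

Lemma ipZr a x z : ip z (a *: x) = Num.conj a * ip z x.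
Proof. by rewrite (ipC x z) (ipC (a *: x) z) ipZl rmorphM. Qed.

Lemma ipNr x z : ip z (- x) = - ip z x.
Proof. by rewrite (ipC x z) (ipC (- x) z) ipNl rmorphN. Qed.

Lemma ipBr x y z : ip z (x - y) = ip z x - ip z y.
Proof. by rewrite ipDr ipNr. Qed.

Lemma ripC x y : rip x y = rip y x.
Proof. by rewrite /rip ipC Re_conjC. Qed.

Lemma ripNr x z : rip z (- x) = - rip z x.
Proof. by rewrite /rip ipNr ReN. Qed.

Lemma ripZr k x z : rip z (k%:C%C *: x) = k * rip z x.
Proof. by rewrite /rip ipZr conj_Creal ?Re_realM //; apply/complex_realP; exists k. Qed.

Lemma ripZl k x z : rip (k%:C%C *: x) z = k * rip x z.
Proof. by rewrite ripC ripZr ripC. Qed.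

Lemma Im_ip x y : complex.Im (ip x y) = rip x ('i *: y).
Proof. by rewrite /rip ipZr Re_conjCiM. Qed.

Lemma ip_eq0 x y : rip x y = 0 -> rip x ('i *: y) = 0 -> ip x y = 0.
Proof. by move=> hRe hIm; apply: complex_ReIm_eq => //; rewrite Im_ip. Qed.

Lemma ipxx_ge0 x : 0 <= ip x x.
Proof. by case: hip => _ _ ->. Qed.

Lemma ipxx_eq0 x : ip x x = 0 -> x = 0.
Proof. by case: hip => _ _ _; apply. Qed.

Lemma sqnorm_ge0 x : 0 <= sqnorm x.
Proof. by have := ipxx_ge0 x; rewrite lecE => /andP[]. Qed.

Lemma sqnorm_eq0 x : sqnorm x = 0 -> x = 0.
Proof.
move=> hx; apply: ipxx_eq0; apply: complex_ReIm_eq => //.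
by move: (ipxx_ge0 x); rewrite lecE => /andP[/eqP <-].
Qed.

Lemma sqnormD x y : sqnorm (x + y) = sqnorm x + sqnorm y + 2 * rip x y.
Proof. rewrite /sqnorm /rip ipDl !ipDr !ReD -/(rip y x) ripC /rip; lra. Qed.

Lemma sqnormN x : sqnorm (- x) = sqnorm x.
Proof. by rewrite /sqnorm ripNr ripC ripNr opprK. Qed.

Lemma sqnormB x y : sqnorm (x - y) = sqnorm x + sqnorm y - 2 * rip x y.
Proof. by rewrite sqnormD sqnormN ripNr mulrN. Qed.

Lemma sqnormZ k x : sqnorm (k%:C%C *: x) = k ^+ 2 * sqnorm x.
Proof. by rewrite /sqnorm ripZr ripC ripZr mulrA -expr2. Qed.

Lemma parallelogram x y : sqnorm (x + y) + sqnorm (x - y) = 2 * sqnorm x + 2 * sqnorm y.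
Proof. rewrite sqnormD sqnormB; lra. Qed.

Lemma rip_ler_sqnorm t x y : 0 < t -> 2 * rip x y <= t * sqnorm x + t^-1 * sqnorm y.
Proof.
move=> t0; have := sqnorm_ge0 (t%:C%C *: x - y).
rewrite sqnormB sqnormZ ripZl expr2 => h.
rewrite -(ler_pM2l t0) mulrDr !mulrA mulfV ?gt_eqF // mul1r; lra.
Qed.

Lemma sqnormD_le t x y : 0 < t ->
  sqnorm (x + y) <= (1 + t) * sqnorm x + (1 + t^-1) * sqnorm y.
Proof. by move=> t0; rewrite sqnormD !mulrDl !mul1r; have := rip_ler_sqnorm x y t0; lra. Qed.

Lemma ipnorm_lt_sqrt x e : 0 < e -> (ipnorm ip x < Num.sqrt e) = (sqnorm x < e).
Proof. exact: ltr_sqrt. Qed.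

Lemma ip_cvgP u l : ip_cvg ip u l <->
  (forall e : R, 0 < e -> exists N, forall n, (N <= n)%N -> sqnorm (u n - l) < e).
Proof.
split=> h e e0.
  have /h[N hN] : 0 < Num.sqrt e by rewrite sqrtr_gt0.
  by exists N => n /hN; rewrite ipnorm_lt_sqrt.
have [N hN] := h (e ^+ 2) (exprn_gt0 2 e0); exists N => n /hN.
by rewrite -ipnorm_lt_sqrt ?exprn_gt0 // sqrtr_sqr gtr0_norm.
Qed.

Lemma ip_cauchyP u : ip_cauchy ip u <->
  (forall e : R, 0 < e -> exists N, forall m n, (N <= m)%N -> (N <= n)%N -> sqnorm (u m - u n) < e).
Proof.
split=> h e e0.
  have /h[N hN] : 0 < Num.sqrt e by rewrite sqrtr_gt0.
  by exists N => m n hm hn; rewrite -ipnorm_lt_sqrt // hN.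
have [N hN] := h (e ^+ 2) (exprn_gt0 2 e0); exists N => m n hm hn.
by rewrite -[e]gtr0_norm // -sqrtr_sqr ipnorm_lt_sqrt ?exprn_gt0 // hN.
Qed.

End InnerProduct.

Lemma exists_inv_succ_lt (R : realType) (e : R) : 0 < e -> exists K : nat, K.+1%:R^-1 < e.
Proof. by move=> /ltr_add_invr[K]; rewrite add0r; exists K. Qed.

Lemma ler_inv_succ (R : realType) (K m : nat) : (K <= m)%N -> m.+1%:R^-1 <= K.+1%:R^-1 :> R.
Proof. by move=> h; rewrite lef_pV2 ?posrE ?ltr0Sn // ler_nat ltnS. Qed.

Lemma le0_of_forall_lerM (R : realFieldType) (c q : R) :
  (forall s, 0 < s -> c <= s * q) -> c <= 0.
Proof.
move=> h; rewrite leNgt; apply/negP => c0.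
have q1 : 0 < `|q| + 1 by rewrite ltr_wpDl.
have s0 : 0 < c / (`|q| + 1) by rewrite divr_gt0.
have := h _ s0; rewrite mulrAC ler_pdivlMr //.
have := ler_norm q; nra.
Qed.

Section Projection.
Variables (R : realType) (V : lmodType R[i]) (ip : V -> V -> R[i]).
Hypothesis hip : is_inner ip.
Variable M : V -> Prop.
Hypotheses (M0 : M 0) (MZD : forall a x y, M x -> M y -> M (a *: x + y)).
Hypothesis M_complete : forall u : nat -> V,
  (forall n, M (u n)) -> ip_cauchy ip u -> exists2 l, M l & ip_cvg ip u l.
Variable w : V.

Local Notation sqnorm := (sqnorm ip).

Let MZ a x : M x -> M (a *: x).
Proof. by move=> Mx; rewrite -[_ *: _]addr0; apply: MZD. Qed.

Let MD x y : M x -> M y -> M (x + y).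
Proof. by move=> Mx My; rewrite -[x]scale1r; apply: MZD. Qed.

Let dists : classical_sets.set R := fun r => exists2 x, M x & r = sqnorm (w - x).
Let dist2 := inf dists.

Let dists_lbound : classical_sets.has_lbound dists.
Proof. by exists 0 => _ [x _ ->]; exact: sqnorm_ge0. Qed.

Let dists_nonempty : classical_sets.nonempty dists.
Proof. by exists (sqnorm (w - 0)), 0. Qed.

Lemma dist2_le x : M x -> dist2 <= sqnorm (w - x).
Proof. by move=> Mx; apply: (ge_inf dists_lbound); exists x. Qed.

Lemma dist2_ge0 : 0 <= dist2.
Proof. by apply: lb_le_inf dists_nonempty _ => _ [x _ ->]; exact: sqnorm_ge0. Qed.

Lemma dist2_approx e : 0 < e -> exists2 x, M x & sqnorm (w - x) < dist2 + e.
Proof.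
by move=> e0; have [_ [x Mx ->] lt_e] := inf_adherent e0 (conj dists_nonempty dists_lbound); exists x.
Qed.

(* Parallelogram law for [w - x] and [w - y]: their mean is [w - m] with [m] in [M],
   so its squared norm is at least [dist2]. *)
Lemma sqnormB_near_min x y a b : M x -> M y ->
  sqnorm (w - x) <= dist2 + a -> sqnorm (w - y) <= dist2 + b -> sqnorm (x - y) <= 2 * a + 2 * b.
Proof.
move=> Mx My hx hy; pose m := (2^-1 : R)%:C%C *: (x + y).
have hm : dist2 <= sqnorm (w - m) by apply/dist2_le/MZ/MD.
have := parallelogram hip (w - y) (w - x).
have -> : (w - y) + (w - x) = (2 : R)%:C%C *: (w - m).
  rewrite /m scalerBr scalerA -rmorphM mulfV ?pnatr_eq0 // scale1r.
  by rewrite rmorph_nat scaler_nat mulr2n opprD addrACA [- y - x]addrC.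
have -> : (w - y) - (w - x) = x - y by rewrite opprB addrC subrKA.
by rewrite (sqnormZ hip) => h; lra.
Qed.

Lemma minimizing_seq : exists xs : nat -> V,
  forall n, M (xs n) /\ sqnorm (w - xs n) <= dist2 + n.+1%:R^-1.
Proof.
pose P n x := M x /\ sqnorm (w - x) <= dist2 + n.+1%:R^-1.
exists (fun n => epsilon (inhabits 0) (P n)) => n; apply: (epsilon_spec _ (P n)).
have /dist2_approx[x Mx lt_x] : 0 < n.+1%:R^-1 :> R by rewrite invr_gt0 ltr0Sn.
by exists x; split; last exact: ltW.
Qed.

Lemma minimizing_seq_cauchy xs :
  (forall n, M (xs n) /\ sqnorm (w - xs n) <= dist2 + n.+1%:R^-1) -> ip_cauchy ip xs.
Proof.
move=> hxs; apply/ip_cauchyP => e e0.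
have /exists_inv_succ_lt[K hK] : 0 < e / 4%:R by rewrite divr_gt0.
exists K => m n le_Km le_Kn; have [Mm hm] := hxs m; have [Mn hn] := hxs n.
have := sqnormB_near_min Mm Mn hm hn.
move: hK; have := ler_inv_succ R le_Km; have := ler_inv_succ R le_Kn.
set im := m.+1%:R^-1; set iN := n.+1%:R^-1; set iK := K.+1%:R^-1; lra.
Qed.

Lemma cvg_minimizing_seq xs z :
  (forall n, sqnorm (w - xs n) <= dist2 + n.+1%:R^-1) -> ip_cvg ip xs z ->
  sqnorm (w - z) <= dist2.
Proof.
move=> hxs /ip_cvgP cvg_z; apply/ler_addgt0Pr => e e0.
(* With [t <= 1] and [t (dist2 + 4) <= e], the bound
   [(1 + t) (dist2 + t) + (1 + t^-1) t^2] of [sqnormD_le] is at most [dist2 + e]. *)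
have d0 := dist2_ge0; pose t := e / (dist2 + 4%:R + e).
have de0 : 0 < dist2 + 4%:R + e by lra.
have t0 : 0 < t by rewrite divr_gt0.
have t1 : t <= 1 by rewrite ler_pdivrMr // mul1r; lra.
have te : t * (dist2 + 4%:R) <= e by rewrite /t mulrAC ler_pdivrMr //; nra.
have [N1 hN1] := exists_inv_succ_lt t0.
have /cvg_z[N2 hN2] : 0 < t ^+ 2 by rewrite exprn_gt0.
pose n := maxn N1 N2.
have close_n : sqnorm (w - xs n) <= dist2 + t.
  move: hN1 (hxs n) (ler_inv_succ R (leq_maxl N1 N2)).
  set iN1 := N1.+1%:R^-1; set i_n := n.+1%:R^-1; lra.
have near_n : (1 + t^-1) * sqnorm (xs n - z) <= t * t + t.
  apply: le_trans (ler_wpM2l _ (ltW (hN2 n (leq_maxr _ _)))) _.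
    by rewrite addr_ge0 ?invr_ge0 ?ltW.
  by rewrite mulrDl mul1r expr2 mulKf ?gt_eqF.
have t_ge0 : 0 <= 1 + t by lra.
have := ler_wpM2l t_ge0 close_n.
have := sqnormD_le hip (w - xs n) (xs n - z) t0; rewrite subrKA.
have : t * t <= t by rewrite -[leRHS]mulr1 ler_pM2l.
nra.
Qed.

Lemma minimizer_orthogonal z : M z ->
  (forall x, M x -> sqnorm (w - z) <= sqnorm (w - x)) ->
  forall x, M x -> ip (w - z) x = 0.
Proof.
move=> Mz zmin.
have rip_le0 x : M x -> rip ip (w - z) x <= 0.
  move=> Mx; suff : 2 * rip ip (w - z) x <= 0 by lra.
  apply: (@le0_of_forall_lerM _ _ (sqnorm x)) => s s0.
  have := zmin _ (MZD s%:C%C Mx Mz).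
  have -> : w - (s%:C%C *: x + z) = (w - z) - s%:C%C *: x by rewrite opprD addrA addrAC.
  rewrite (sqnormB hip (w - z)) (sqnormZ hip) (ripZr hip) expr2 => h.
  by rewrite -(ler_pM2l s0); lra.
have rip0 x : M x -> rip ip (w - z) x = 0.
  move=> Mx; apply/eqP; rewrite eq_le rip_le0 //=.
  have /rip_le0 : M (- x) by rewrite -scaleN1r; exact: MZ.
  by rewrite (ripNr hip); lra.
by move=> x Mx; apply: ip_eq0 => //; apply: rip0 => //; exact: MZ.
Qed.

Theorem orthogonal_projection : exists2 z, M z & forall x, M x -> ip (w - z) x = 0.
Proof.
have [xs hxs] := minimizing_seq.
have [z Mz cvg_z] := M_complete (fun n => (hxs n).1) (minimizing_seq_cauchy hxs).
exists z => //; apply: minimizer_orthogonal => // x Mx.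
exact: le_trans (cvg_minimizing_seq (fun n => (hxs n).2) cvg_z) (dist2_le Mx).
Qed.

End Projection.

Section ProductSpace.
Variables (R : realType) (X Y : lmodType R[i]).
Variables (ipX : X -> X -> R[i]) (ipY : Y -> Y -> R[i]).
Hypotheses (iX : is_inner ipX) (iY : is_inner ipY).

Definition ip_pair (p q : X * Y) : R[i] := ipX p.1 q.1 + ipY p.2 q.2.

Lemma is_inner_pair : is_inner ip_pair.
Proof.
split=> [a p q r | p q | p | [x y]].
- by rewrite /ip_pair /= (ipZDl iX) (ipZDl iY) mulrDr addrACA.
- by rewrite /ip_pair (ipC iX p.1 q.1) (ipC iY p.2 q.2) rmorphD.
- by apply: addr_ge0; apply: ipxx_ge0.
rewrite /ip_pair /= => /eqP; rewrite paddr_eq0 ?ipxx_ge0 //.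
by case/andP=> /eqP /(ipxx_eq0 iX) -> /eqP /(ipxx_eq0 iY) ->.
Qed.

Lemma sqnorm_pair p : sqnorm ip_pair p = sqnorm ipX p.1 + sqnorm ipY p.2.
Proof. exact: ReD. Qed.

Lemma ip_cauchy_fst u : ip_cauchy ip_pair u -> ip_cauchy ipX (fun n => (u n).1).
Proof.
move/ip_cauchyP => cu; apply/ip_cauchyP => e /cu[N hN]; exists N => m n hm hn.
by have := hN m n hm hn; rewrite sqnorm_pair; have := sqnorm_ge0 iY ((u m).2 - (u n).2); lra.
Qed.

Lemma ip_cauchy_snd u : ip_cauchy ip_pair u -> ip_cauchy ipY (fun n => (u n).2).
Proof.
move/ip_cauchyP => cu; apply/ip_cauchyP => e /cu[N hN]; exists N => m n hm hn.
by have := hN m n hm hn; rewrite sqnorm_pair; have := sqnorm_ge0 iX ((u m).1 - (u n).1); lra.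
Qed.

Lemma ip_cvg_pair u x y : ip_cvg ipX (fun n => (u n).1) x -> ip_cvg ipY (fun n => (u n).2) y ->
  ip_cvg ip_pair u (x, y).
Proof.
move=> /ip_cvgP cx /ip_cvgP cy; apply/ip_cvgP => e e0.
have e2 : 0 < e / 2 by rewrite divr_gt0.
have [N1 h1] := cx _ e2; have [N2 h2] := cy _ e2.
exists (maxn N1 N2) => n; rewrite geq_max => /andP[/h1 hx /h2 hy].
by rewrite sqnorm_pair; move: hx hy => /=; lra.
Qed.

End ProductSpace.

Section Graph.
Variables (R : realType) (X Y : lmodType R[i]) (T : op X Y).

Definition op_graph (p : X * Y) : Prop := dom T p.1 /\ p.2 = app T p.1.

Hypothesis linT : is_linop T.

Lemma op_graph0 : op_graph 0.
Proof.
have T0 : dom T 0 by case: linT.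
split=> //=; have := linT.2 1 0 0 T0 T0; rewrite !scale1r addr0 => -[_ h].
by apply/esym/(@addrI _ (app T 0)); rewrite addr0 -h.
Qed.

Lemma op_graphZD a p q : op_graph p -> op_graph q -> op_graph (a *: p + q).
Proof.
case: p q => [x y] [x' y'] [/= Tx ->] [/= Tx' ->].
have [Tax Tax_eq] := linT.2 a _ _ Tx Tx'.
by split=> //=; rewrite Tax_eq.
Qed.

Lemma op_graph_complete (ipX : X -> X -> R[i]) (ipY : Y -> Y -> R[i]) :
  is_hilbert ipX -> is_hilbert ipY -> closed_op ipX ipY T ->
  forall u, (forall n, op_graph (u n)) -> ip_cauchy (ip_pair ipX ipY) u ->
  exists2 l, op_graph l & ip_cvg (ip_pair ipX ipY) u l.
Proof.
move=> [iX cX] [iY cY] closedT u Gu cu.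
have [x cvg_x] := cX _ (ip_cauchy_fst iY cu).
have [y cvg_y] := cY _ (ip_cauchy_snd iX cu).
have cvg_Tx : ip_cvg ipY (fun n => app T (u n).1) y.
  by move=> e /cvg_y[N hN]; exists N => n /hN; rewrite (Gu n).2.
have [Tx Txy] := closedT _ _ _ (fun n => (Gu n).1) cvg_x cvg_Tx.
by exists (x, y); [split | exact: ip_cvg_pair].
Qed.

End Graph.

Lemma adjoint_spec (R : realType) (X Y : lmodType R[i])
    (ipX : X -> X -> R[i]) (ipY : Y -> Y -> R[i]) (T : op X Y) v :
  dom (adjoint ipX ipY T) v -> adj_rel ipX ipY T v (app (adjoint ipX ipY T) v).
Proof. by move=> hv; apply: (epsilon_spec _ (adj_rel ipX ipY T v)). Qed.

Section Adjoint.
Variables (R : realType) (X Y : lmodType R[i]).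
Variables (ipX : X -> X -> R[i]) (ipY : Y -> Y -> R[i]) (T : op X Y).
Local Notation Tadj := (adjoint ipX ipY T).

Hypotheses (iX : is_inner ipX) (denseT : densely_defined ipX T).

Lemma dense_orthogonal_eq0 c : (forall x, dom T x -> ipX x c = 0) -> c = 0.
Proof.
move=> c_perp; apply: (sqnorm_eq0 iX); apply/eqP; rewrite eq_le sqnorm_ge0 // andbT.
rewrite leNgt; apply/negP => c0.
have /(denseT c)[y [Ty]] : 0 < Num.sqrt (sqnorm ipX c) by rewrite sqrtr_gt0.
rewrite ipnorm_lt_sqrt // (sqnormB iX) (ripC iX) /rip c_perp // (_ : complex.Re 0 = 0) //.
by have := sqnorm_ge0 iX y; lra.
Qed.

Lemma adjointE v z : adj_rel ipX ipY T v z -> dom Tadj v /\ app Tadj v = z.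
Proof.
move=> hz; have hv : dom Tadj v by exists z.
split=> //; apply/eqP; rewrite -subr_eq0; apply/eqP/dense_orthogonal_eq0 => x Tx.
by rewrite (ipBr iX) -(adjoint_spec hv Tx) -hz // subrr.
Qed.

End Adjoint.

Section Biadjoint.
Variables (R : realType) (X Y : lmodType R[i]).
Variables (ipX : X -> X -> R[i]) (ipY : Y -> Y -> R[i]) (T : op X Y).
Hypotheses (hX : is_hilbert ipX) (hY : is_hilbert ipY).
Hypotheses (linT : is_linop T) (denseT : densely_defined ipX T).
Hypothesis closedT : closed_op ipX ipY T.
Local Notation Tadj := (adjoint ipX ipY T).

Let iX : is_inner ipX := hX.1.
Let iY : is_inner ipY := hY.1.

Lemma biadjoint w u :
  (forall v, dom Tadj v -> ipY u v = ipX w (app Tadj v)) -> dom T w /\ app T w = u.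
Proof.
move=> hwu.
have [[z _] [/= Tz ->] z_perp] := orthogonal_projection (is_inner_pair iX iY)
  (op_graph0 linT) (op_graphZD linT) (op_graph_complete hX hY closedT) (w, u).
set v := u - app T z.
have adj_v : adj_rel ipX ipY T v (z - w).
  move=> x Tx; rewrite (ipC iY v) (ipC iX (z - w)); congr Num.conj.
  have := z_perp (x, app T x) (conj Tx erefl); rewrite /ip_pair /= => /eqP; rewrite addr_eq0 => /eqP h.
  by rewrite /v -[ipY _ _]opprK -h -(ipNl iX) opprB.
have [v_dom v_adj] := adjointE iX denseT adj_v.
have v_sq : sqnorm ipY v = - sqnorm ipX (w - z).
  rewrite /sqnorm /rip {1}/v (ipBl iY) (hwu _ v_dom) v_adj (adj_v _ Tz) -(ipBl iX).
  by rewrite -[z - w]opprB (ipNr iX) ReN.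
have /eqP : sqnorm ipY v + sqnorm ipX (w - z) = 0 by rewrite v_sq addNr.
rewrite paddr_eq0 ?sqnorm_ge0 // => /andP[/eqP /(sqnorm_eq0 iY) v0 /eqP /(sqnorm_eq0 iX) wz].
by move/subr0_eq: wz => ->; split; last by move/subr0_eq: v0.
Qed.

Lemma neg_adjoint_sub (S : op Y X) :
  op_sub (op_neg Tadj) S -> op_sub (op_neg (adjoint ipY ipX S)) T.
Proof.
move=> TS v v_dom; apply: biadjoint => y y_dom.
have [Sy Sy_eq] := TS y y_dom.
have := adjoint_spec v_dom Sy; rewrite Sy_eq (ipNl iX (app Tadj y)) => h.
rewrite (ipNl iY (app (adjoint ipY ipX S) v)) (ipC iY y) -h rmorphN opprK.
by rewrite (ipC iX _ v).
Qed.

End Biadjoint.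

Lemma BD_ker_I_comp (R : realType) (X Y : lmodType R[i])
  (ipX : X -> X -> R[i]) (ipY : Y -> Y -> R[i]) (T : op X Y) (S : op Y X) :
  is_hilbert ipX -> is_hilbert ipY ->
  is_linop S -> densely_defined ipY S -> closed_op ipY ipX S ->
  op_sub (op_neg (adjoint ipY ipX S)) T ->
  forall u, BD ipX ipY T (op_neg (adjoint ipY ipX S)) u <-> ker_I_comp T S u.
Proof.
move=> hX hY linS denseS closedS ST u; split.
- case=> Tu u_perp; split=> //; apply: (biadjoint hY hX linS denseS closedS) => v v_dom.
  have [_ Tv] := ST v v_dom; move: (u_perp v v_dom).
  by rewrite Tv (ipNr hY.1) => /eqP; rewrite subr_eq0 => /eqP.
- case=> Tu [STu STu_eq]; split=> // v v_dom /=.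
  have [_ Tv] := ST v v_dom.
  by rewrite Tv (ipNr hY.1) -(adjoint_spec v_dom STu) STu_eq subrr.
Qed.

Theorem lemma2p5 (R : realType) (H0 H1 : lmodType (R[i]))
  (ip0 : H0 -> H0 -> R[i]) (ip1 : H1 -> H1 -> R[i])
  (hH0 : is_hilbert ip0) (hH1 : is_hilbert ip1)
  (G : op H0 H1) (D : op H1 H0)
  (linG : is_linop G) (denseG : densely_defined ip0 G) (closedG : closed_op ip0 ip1 G)
  (linD : is_linop D) (denseD : densely_defined ip1 D) (closedD : closed_op ip1 ip0 D)
  (hGD : op_sub (op_neg (adjoint ip0 ip1 G)) D) :
  (forall u : H0,
     BD ip0 ip1 G (op_neg (adjoint ip1 ip0 D)) u <-> ker_I_comp G D u) /\
  (forall q : H1,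
     BD ip1 ip0 D (op_neg (adjoint ip0 ip1 G)) q <-> ker_I_comp D G q).
Proof.
have hDG := neg_adjoint_sub hH0 hH1 linG denseG closedG hGD.
split; [exact: BD_ker_I_comp hDG | exact: BD_ker_I_comp hGD].
Qed.
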